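(* $\mathrm{1RFA}/n\neq\mathrm{1RFA}/Rn$.
   Context: A 1rfa is a one-way deterministic finite automaton satisfying the reversibility condition (for every state $q$ and tape symbol $\sigma$ at most one $q'$ with $\delta(q',\sigma)=q$). For equal-length strings $x,y$, $\genfrac{[}{]}{0pt}{}{x}{y}$ is the two-track string with $x$ on the upper track and $y$ on the lower track. $\mathrm{1RFA}/n$ is the family of languages $L$ for which there exist a 1rfa $M$ and a (deterministic) advice function $h:\mathbb{N}\to\Gamma^*$ with $|h(n)|=n$ such that $M(\genfrac{[}{]}{0pt}{}{x}{h(|x|)})=L(x)$ for all $x$. $\mathrm{1RFA}/Rn$ is defined analogously with randomized advice: a probability ensemble $\{D_n\}$, $D_n$ a distribution on $\Gamma^n$, such that $M$ on $\genfrac{[}{]}{0pt}{}{x}{y}$ with $y\sim D_n$ outputs $L(x)$ with probability at least $1-\varepsilon$ for a constant $\varepsilon\in[0,1/2)$. *)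

From HB Require Import structures.
From mathcomp Require Import all_boot all_order all_algebra.
From Stdlib Require Import Reals.
From mathcomp Require Import Rstruct.
Set Implicit Arguments. Unset Strict Implicit. Unset Printing Implicit Defensive.
Import Order.TTheory GRing.Theory Num.Theory.

Inductive tape_sym (A : Type) := Cent | Dollar | Sym of A.
Arguments Cent {A}. Arguments Dollar {A}.

Record dfa1 (A : Type) := Dfa1 {
  state : finType;
  q_init : state;
  delta : state -> tape_sym A -> state;
  acc : pred state;
  rej : pred state }.
Arguments state {A} d.
Arguments q_init {A} d.
Arguments delta {A} d _ _.
Arguments acc {A} d _.
Arguments rej {A} d _.

Definition is_1rfa (A : Type) (M : dfa1 A) : Prop :=
  (forall q, ~~ (acc M q && rej M q)) /\
  (forall (s : tape_sym A) (q q1 q2 : state M),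
      delta M q1 s = q -> delta M q2 s = q -> q1 = q2).

Fixpoint run (A : Type) (M : dfa1 A) (q : state M) (w : seq (tape_sym A)) : state M :=
  match w with
  | [::] => q
  | a :: w' => if acc M q || rej M q then q else run (delta M q a) w'
  end.

Definition outputs (A : Type) (M : dfa1 A) (w : seq A) (b : bool) : bool :=
  let q := run (q_init M) (Cent :: map (@Sym A) w ++ [:: Dollar]) in
  if b then acc M q else rej M q.

Definition track2 (S G : Type) (x : seq S) (y : seq G) : seq (S * G) := zip x y.

Definition in_1RFA_n (S : finType) (L : seq S -> bool) : Prop :=
  exists (G : finType) (M : dfa1 (S * G)), is_1rfa M /\
    exists h : forall n : nat, n.-tuple G,
      forall x : seq S, outputs M (track2 x (h (size x))) (L x).

Local Open Scope ring_scope.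

Definition is_distr (T : finType) (D : {ffun T -> R}) : Prop :=
  (forall t, 0 <= D t) /\ \sum_(t : T) D t = 1.

Definition in_1RFA_Rn (S : finType) (L : seq S -> bool) : Prop :=
  exists (G : finType) (M : dfa1 (S * G)), is_1rfa M /\
    exists eps : R, 0 <= eps /\ eps < 1 / 2 /\
    exists D : forall n : nat, {ffun n.-tuple G -> R},
      (forall n, is_distr (D n)) /\
      forall x : seq S,
        1 - eps <= \sum_(y : (size x).-tuple G | outputs M (track2 x y) (L x)) D (size x) y.

(** The language of words whose two halves agree (the middle letter of an odd
    word is ignored) separates the two classes.

    With deterministic advice the automaton reads the first half of a word of
    length [2m] against a fixed advice string, so its state after that half
    must tell apart all [2^m] possible first halves: two different first halves
    [u], [u'] followed by [u] get different answers.  Hence it needs at least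
    [2^m] states for every [m], which is impossible.

    With randomized advice, take a uniformly random [z] in [F^m] for a finite
    field [F] and use the advice [z, (0), -z].  A reversible automaton computes
    [sum_i x_i y_i = sum_i (x_i - x_(m+i)) z_i] in [F] and accepts iff it is
    zero.  This is always zero when the halves agree, and otherwise it is a
    nonzero linear form in [z], hence zero with probability [1/|F|]; over
    [F_3] the error is [1/3]. *)
From mathcomp Require Import all_boot all_order all_algebra.
From Stdlib Require Import Reals.
From mathcomp Require Import Rstruct.
From mathcomp Require Import ring lra zify.
Set Implicit Arguments. Unset Strict Implicit. Unset Printing Implicit Defensive.
Import Order.TTheory GRing.Theory Num.Theory.

Definition twin_halves (S : eqType) (x : seq S) : bool :=
  take (size x)./2 x == drop (uphalf (size x)) x.

Lemma twin_halves_cat (S : eqType) (u v : seq S) :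
  size u = size v -> twin_halves (u ++ v) = (u == v).
Proof.
move=> uv; rewrite /twin_halves size_cat uv addnn doubleK uphalf_double.
by rewrite -{1}uv take_size_cat // -uv drop_size_cat.
Qed.

Lemma twin_halvesE (S : eqType) (x0 : S) (x : seq S) :
  twin_halves x =
  [forall i : 'I_(size x)./2, nth x0 x i == nth x0 x (uphalf (size x) + i)].
Proof.
have size_half : size (take (size x)./2 x) = (size x)./2.
  by rewrite size_takel // -{2}(odd_double_half (size x)) -addnn; lia.
have size_tail : size (drop (uphalf (size x)) x) = (size x)./2.
  by rewrite size_drop uphalf_half -{1}(odd_double_half (size x)) -addnn; lia.
apply/eqP/forallP => [eq_halves i | eq_nth].
  by rewrite -(nth_take x0 (ltn_ord i)) eq_halves nth_drop.
apply: (eq_from_nth (x0 := x0)); first by rewrite size_half size_tail.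
move=> i; rewrite size_half => lt_i.
by rewrite nth_take // nth_drop; apply/eqP/(eq_nth (Ordinal lt_i)).
Qed.

Lemma run_halted (A : Type) (M : dfa1 A) q w :
  acc M q || rej M q -> run (M := M) q w = q.
Proof. by case: w => //= a w ->. Qed.

Lemma run_cat (A : Type) (M : dfa1 A) q w1 w2 :
  run (M := M) q (w1 ++ w2) = run (run q w1) w2.
Proof.
elim: w1 q => //= a w1 IH q.
by case: ifP => [halted | _]; [rewrite !run_halted | exact: IH].
Qed.

Section DeterministicAdvice.

Variables (S G : Type) (M : dfa1 (S * G)).
Hypothesis acc_rej_disjoint : forall q, ~~ (acc M q && rej M q).

Definition halts_with (q : state M) (b : bool) : bool :=
  if b then acc M q else rej M q.

Lemma halts_with_inj q b b' : halts_with q b -> halts_with q b' -> b = b'.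
Proof.
have := acc_rej_disjoint q.
by case: b; case: b' => //= /negP nboth qb qb'; case: nboth; rewrite ?qb ?qb'.
Qed.

Definition prefix_state (y : seq G) (u : seq S) : state M :=
  run (q_init M) (Cent :: map (@Sym _) (zip u (take (size u) y))).

Lemma outputs_cat (y : seq G) (u v : seq S) b :
  size u <= size y ->
  outputs M (track2 (u ++ v) y) b =
  halts_with (run (prefix_state y u)
                  (map (@Sym _) (zip v (drop (size u) y)) ++ [:: Dollar])) b.
Proof.
move=> le_uy; rewrite /outputs /track2 -[in zip _ y](cat_take_drop (size u) y).
by rewrite zip_cat ?size_takel // map_cat -catA -cat_cons run_cat.
Qed.

Lemma prefix_state_separates (L : seq S -> bool) (y : seq G) (u u' v : seq S) :
  size u = size u' -> size u <= size y ->
  outputs M (track2 (u ++ v) y) (L (u ++ v)) ->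
  outputs M (track2 (u' ++ v) y) (L (u' ++ v)) ->
  L (u ++ v) != L (u' ++ v) -> prefix_state y u != prefix_state y u'.
Proof.
move=> uu' le_uy out_u out_u' neq_L; apply: contra neq_L => /eqP same_state.
rewrite outputs_cat // in out_u; rewrite outputs_cat -?uu' // in out_u'.
by apply/eqP/(halts_with_inj out_u); rewrite same_state.
Qed.

End DeterministicAdvice.

Lemma twin_halves_notin_1RFA_n : ~ in_1RFA_n (@twin_halves bool).
Proof.
move=> [G [M [[acc_rej_disjoint _] [h decides]]]].
pose m := #|state M|; pose y : seq G := h (m + m).
have size_y : size y = m + m by rewrite size_tuple.
pose st (u : m.-tuple bool) := prefix_state M y u.
have st_inj : injective st.
  move=> u u' same_state; apply/val_inj/eqP; move: same_state.
  apply: contra_eqT => neq_uu'.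
  have decides_2m (w : m.-tuple bool) : outputs M (track2 (w ++ u) y) (twin_halves (w ++ u)).
    by have := decides (w ++ u); rewrite size_cat !size_tuple.
  apply: (prefix_state_separates acc_rej_disjoint) (decides_2m u) (decides_2m u') _.
  - by rewrite !size_tuple.
  - by rewrite size_tuple size_y leq_addr.
  by rewrite !twin_halves_cat ?size_tuple // eqxx [tval u' == _]eq_sym (negbTE neq_uu').
have := leq_card _ st_inj.
by rewrite card_tuple card_bool leqNgt ltn_expl.
Qed.

Local Open Scope ring_scope.

Section InnerProductAutomaton.

Variable F : finFieldType.

Definition ip_term (p : bool * F) : F := (p.1 : nat)%:R * p.2.

(* [inl s]: still reading, with partial sum [s]; [inr s]: final sum [s].
   The endmarker [$] swaps the two copies so that it is injective too. *)
Definition ip_delta (q : F + F) (t : tape_sym (bool * F)) : F + F :=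
  match t, q with
  | Cent, _ => q
  | Sym p, inl s => inl (s + ip_term p)
  | Sym _, inr s => inr s
  | Dollar, inl s => inr s
  | Dollar, inr s => inl s
  end.

Definition ip_fa : dfa1 (bool * F) :=
  @Dfa1 _ (F + F)%type (inl 0) ip_delta
    (fun q => if q is inr s then s == 0 else false)
    (fun q => if q is inr s then s != 0 else false).

Lemma ip_fa_1rfa : is_1rfa ip_fa.
Proof.
split=> [[s|s] //= | ]; first by rewrite andbN.
by move=> [| |p] q [s1|s1] [s2|s2] //= <- // [] => [|| /addIr] ->.
Qed.

Lemma run_ip_fa s w :
  run (inl s : state ip_fa) (map (@Sym _) w ++ [:: Dollar]) =
  inr (s + \sum_(p <- w) ip_term p).
Proof.
elim: w s => [|p w IH] s /=; first by rewrite big_nil addr0.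
by rewrite IH big_cons addrA.
Qed.

Lemma outputs_ip_fa (x : seq bool) (y : seq F) b :
  outputs ip_fa (track2 x y) b = ((\sum_(p <- zip x y) ip_term p == 0) == b).
Proof. by rewrite /outputs /= run_ip_fa add0r; case: b; rewrite ?eqb_id ?eqbF_neg. Qed.

End InnerProductAutomaton.

Section UniformPushforward.

Variables (T U : finType) (n : nat) (f : T -> seq U).
Hypothesis size_f : forall z, size (f z) = n.

Definition push_uniform : {ffun n.-tuple U -> R} :=
  [ffun y => \sum_(z : T) #|T|%:R^-1 * (val y == f z)%:R].

Lemma push_uniform_event (P : pred (seq U)) :
  \sum_(y : n.-tuple U | P y) push_uniform y =
  #|[pred z | P (f z)]|%:R / #|T|%:R.
Proof.
under eq_bigr do rewrite ffunE.
rewrite exchange_big /= mulrC -[#|[pred z | _]|]sum1_card natr_sum mulr_sumr.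
rewrite [RHS]big_mkcond /=; apply: eq_bigr => z _; rewrite -mulr_sumr inE.
have size_fz : size (f z) == n by rewrite size_f.
rewrite big_mkcond (bigD1 (Tuple size_fz)) //= eqxx big1 ?addr0.
  by case: (P (f z)); rewrite ?mulr0.
move=> y y_neq; case: eqP => [eq_y | _]; last by rewrite if_same.
by case/eqP: y_neq; apply: val_inj.
Qed.

Lemma push_uniform_distr : (0 < #|T|)%nat -> is_distr push_uniform.
Proof.
move=> T_gt0; split=> [y | ].
  by rewrite ffunE; apply: sumr_ge0 => z _; rewrite mulr_ge0 ?invr_ge0 ?ler0n.
rewrite (push_uniform_event predT) (eq_card (B := T)) // mulfV //.
by rewrite pnatr_eq0 -lt0n.
Qed.

End UniformPushforward.

Section MirroredAdvice.

Variable F : finFieldType.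

Definition mirrored_advice n (z : {ffun 'I_n./2 -> F}) : seq F :=
  [seq z i | i <- enum 'I_n./2] ++ nseq (odd n) 0 ++ [seq - z i | i <- enum 'I_n./2].

Lemma size_mirrored_advice n z : size (@mirrored_advice n z) = n.
Proof.
rewrite !size_cat !size_map size_nseq -enumT size_enum_ord.
by rewrite addnCA addnn odd_double_half.
Qed.

Definition half_diff (x : seq bool) (i : nat) : F :=
  (nth false x i : nat)%:R - (nth false x (uphalf (size x) + i) : nat)%:R.

Lemma half_diff_eq0 x i :
  (half_diff x i == 0) = (nth false x i == nth false x (uphalf (size x) + i)).
Proof.
rewrite /half_diff subr_eq0.
by case: (nth false x i); case: (nth false x _); rewrite //= ?oner_eq0 ?eqxx // eq_sym oner_eq0.
Qed.

Definition linear_form m (d : 'I_m -> F) (z : {ffun 'I_m -> F}) : F :=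
  \sum_i d i * z i.

Lemma ip_term_sum_nth k (a : seq bool) (b : seq F) :
  size a = k -> size b = k ->
  \sum_(p <- zip a b) ip_term p = \sum_(i < k) (nth false a i : nat)%:R * nth 0 b i.
Proof.
move=> size_a size_b.
rewrite (big_nth (false, 0)) size_zip size_a size_b minnn big_mkord.
by apply: eq_bigr => i _; rewrite nth_zip ?size_a ?size_b.
Qed.

Lemma ip_mirrored_advice n (x : seq bool) (z : {ffun 'I_n./2 -> F}) :
  size x = n ->
  \sum_(p <- zip x (mirrored_advice z)) ip_term p =
  linear_form (fun i : 'I_n./2 => half_diff x i) z.
Proof.
move=> size_x; set m := n./2; set o := odd n.
have n_split : (o + m + m = n)%nat by rewrite -addnA addnn odd_double_half.
have x_split : x = take m x ++ take o (drop m x) ++ drop (o + m)%nat x.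
  by rewrite -drop_drop !cat_take_drop.
have size_head : size (take m x) = m by rewrite size_takel //; lia.
have size_mid : size (take o (drop m x)) = o by rewrite size_takel // size_drop; lia.
have size_tail : size (drop (o + m)%nat x) = m by rewrite size_drop; lia.
have size_z : size [seq z i | i <- enum 'I_m] = m by rewrite size_map size_enum_ord.
have size_nz : size [seq - z i | i <- enum 'I_m] = m by rewrite size_map size_enum_ord.
rewrite {1}x_split /mirrored_advice zip_cat ?size_head // zip_cat ?size_mid ?size_nseq //.
rewrite !big_cat /= (ip_term_sum_nth size_head size_z).
rewrite (ip_term_sum_nth size_mid (size_nseq _ _)) (ip_term_sum_nth size_tail size_nz).
rewrite [\sum_(i < o) _]big1 ?add0r => [|i _]; last by rewrite nth_nseq if_same mulr0.
rewrite -big_split /=; apply: eq_bigr => i _.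
rewrite /half_diff size_x uphalf_half -/o -/m nth_take // nth_drop.
by rewrite !(nth_map i) ?size_enum_ord -?enumT ?size_enum_ord // nth_ord_enum mulrN -mulrBl.
Qed.

(* Translating [z] along the [j]-th coordinate shifts the value of the form
   by an arbitrary amount, so all its level sets have the same size. *)
Lemma card_linear_form_eq m (d : 'I_m -> F) j (k : F) : d j != 0 ->
  #|[pred z | linear_form d z == k]| = #|[pred z | linear_form d z == 0]|.
Proof.
move=> dj_neq0; pose t := k / d j.
pose shift (z : {ffun 'I_m -> F}) := [ffun i => z i + (i == j)%:R * t].
have linear_form_shift z : linear_form d (shift z) = linear_form d z + k.
  rewrite /linear_form; under eq_bigr do rewrite ffunE mulrDr.
  rewrite big_split /=; congr (_ + _); rewrite (bigD1 j) //= eqxx mul1r big1 ?addr0.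
    by rewrite /t mulrCA mulfV // mulr1.
  by move=> i /negbTE ->; rewrite mul0r mulr0.
have shift_inj : injective shift.
  move=> z1 z2 /ffunP same; apply/ffunP => i.
  by have := same i; rewrite !ffunE => /addIr.
rewrite -!sum1_card (reindex_inj shift_inj) /=; apply: eq_bigl => z.
by rewrite !inE linear_form_shift -subr_eq0 addrK.
Qed.

Lemma card_linear_form_eq0 m (d : 'I_m -> F) j : d j != 0 ->
  muln #|[pred z | linear_form d z == 0]| #|F| = expn #|F| m.
Proof.
move=> dj_neq0.
have level_sets :
    (\sum_(k : F) #|[pred z | linear_form d z == k]| = #|{ffun 'I_m -> F}|)%nat.
  rewrite -sum1_card (partition_big (linear_form d) xpredT) //=.
  by apply: eq_bigr => k _; rewrite -sum1_card; apply: eq_bigl => z; rewrite inE.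
rewrite card_ffun card_ord in level_sets.
rewrite -level_sets (eq_bigr _ (fun k _ => card_linear_form_eq k dj_neq0)).
by rewrite sum_nat_const mulnC.
Qed.

Lemma linear_form_neq0_prob m (d : 'I_m -> F) j : d j != 0 ->
  #|[pred z | linear_form d z != 0]|%:R / #|{ffun 'I_m -> F}|%:R
  = 1 - #|F|%:R^-1 :> R.
Proof.
move=> dj_neq0; have card_zeros := card_linear_form_eq0 dj_neq0.
set N := #|[pred z | linear_form d z == 0]| in card_zeros *.
have card_F_gt0 : (0 < #|F|)%nat by apply/card_gt0P; exists 0.
have N_gt0 : (0 < N)%nat.
  by move: (expn_gt0 #|F| m); rewrite card_F_gt0 -card_zeros muln_gt0 => /andP[].
have card_split :
    addn #|[pred z | linear_form d z != 0]| N = #|{ffun 'I_m -> F}|.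
  by rewrite addnC -(cardC [pred z | linear_form d z == 0]).
rewrite card_ffun card_ord -card_zeros in card_split *.
move/(congr1 (fun k : nat => k%:R : R)): card_split; rewrite natrD natrM => card_split.
have [N_neq0 card_F_neq0] : N%:R != 0 :> R /\ #|F|%:R != 0 :> R.
  by rewrite !pnatr_eq0 -!lt0n.
rewrite -[#|_|%:R](addrK N%:R) card_split.
by field; rewrite N_neq0 card_F_neq0.
Qed.

Lemma mirrored_advice_success (x : seq bool) :
  1 - #|F|%:R^-1 <=
  \sum_(y : (size x).-tuple F | outputs (ip_fa F) (track2 x y) (twin_halves x))
     push_uniform (size x) (@mirrored_advice (size x)) y.
Proof.
rewrite (push_uniform_event (@size_mirrored_advice _)
           (fun y => outputs (ip_fa F) (track2 x y) (twin_halves x))).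
set form := linear_form (fun i : 'I_(size x)./2 => half_diff x i).
have outputs_form z : outputs (ip_fa F) (track2 x (mirrored_advice z)) (twin_halves x)
                      = ((form z == 0) == twin_halves x).
  by rewrite outputs_ip_fa (ip_mirrored_advice _ (erefl (size x))).
have twinE : twin_halves x = [forall i : 'I_(size x)./2, half_diff x i == 0].
  by rewrite (twin_halvesE false); apply: eq_forallb => i; rewrite half_diff_eq0.
rewrite twinE in outputs_form *.
case: (boolP [forall i, _]) outputs_form
  => [/forallP twin | /forallPn [j diff_j]] outputs_form.
  have form0 z : form z = 0.
    by rewrite /form /linear_form big1 // => i _; rewrite (eqP (twin i)) mul0r.
  rewrite [X in X%:R / _](eq_card (B := {ffun 'I_(size x)./2 -> F})) => [|z].
    by rewrite mulfV ?gerBl ?invr_ge0 // pnatr_eq0 -lt0n; apply/card_gt0P; exists 0.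
  by rewrite !inE outputs_form form0 eqxx.
rewrite [X in X%:R / _](eq_card (B := [pred z | form z != 0])) => [|z].
  by rewrite (linear_form_neq0_prob diff_j).
by rewrite !inE outputs_form eqbF_neg.
Qed.

End MirroredAdvice.

Lemma twin_halves_in_1RFA_Rn : in_1RFA_Rn (@twin_halves bool).
Proof.
exists 'F_3, (ip_fa 'F_3); split; first exact: ip_fa_1rfa.
exists (1 / 3); split; first lra; split; first lra.
exists (fun n => push_uniform n (@mirrored_advice 'F_3 n)); split=> [n | x].
  apply: push_uniform_distr; first exact: size_mirrored_advice.
  by apply/card_gt0P; exists [ffun=> 0].
by have := mirrored_advice_success 'F_3 x; rewrite card_Fp // div1r.
Qed.

Theorem corollary4p4 :
  ~ (forall (S : finType) (L : seq S -> bool), in_1RFA_n L <-> in_1RFA_Rn L).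
Proof.
move=> same_class; apply: twin_halves_notin_1RFA_n.
by apply/same_class; exact: twin_halves_in_1RFA_Rn.
Qed.
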